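(* Let $n$ be an even positive integer, $m\ge 2$ an integer, and $f$ an integer with $1\le f\le m/2$ and $\gcd(f,m)=1$. Let $G$ be the dense Random Integer Generation game with $n$ players, $m$ strategies and parameter $f$ (defined in the context). Let $\bar{\sigma}$ be the mixed strategy profile in which every player plays the uniform distribution $(1/m,\dots,1/m)$ on $\{0,1,\dots,m-1\}$. Then $\bar{\sigma}$ is an alliance-resistant Nash equilibrium of $G$, and it is the only Nash equilibrium of $G$.
   Context: A one-shot game with $n$ players consists of finite pure-strategy sets $S_1,\dots,S_n$ and utility functions $u_i : S_1\times\cdots\times S_n \to \mathbb{R}$; players choose simultaneously and independently. A mixed strategy for player $i$ is a probability distribution $\sigma_i$ on $S_i$; a mixed strategy profile is $\sigma=(\sigma_1,\dots,\sigma_n)$, and $u_i(\sigma)$ denotes the expected utility when each $s_i$ is drawn independently from $\sigma_i$. A profile $\sigma$ is a Nash equilibrium if for every player $i$ and every mixed strategy $\tilde\sigma_i$ of player $i$, $u_i(\sigma) \ge u_i(\tilde\sigma_i, \sigma_{-i})$. A profile $\sigma$ is an alliance-resistant Nash equilibrium if for every non-empty set $P$ of players and every choice of mixed strategies $\tilde\sigma_P$ for the members of $P$, $u_P(\sigma) \ge u_P(\tilde\sigma_P, \sigma_{-P})$, where $u_P$ is the sum of the utilities of the members of $P$. Define $g:\mathbb{Z}\to\{-1,0,1\}$ by: writing $l$ modulo $m$ as a representative in $\{0,\dots,m-1\}$, $g(l)=1$ if $0\le l\le f-1$, $g(l)=-1$ if $m-f\le l\le m-1$, and $g(l)=0$ otherwise.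 Let $B=B^{(m,f)}$ be the $m\times m$ matrix with rows and columns indexed by $\{0,\dots,m-1\}$ and entries $B_{a,b}=g(b-a)$. The dense RIG game: each player $i\in\{1,\dots,n\}$ has pure strategy set $\{0,1,\dots,m-1\}$; players are paired as $(2k-1,2k)$ for $k=1,\dots,n/2$; at outcome $s=(s_1,\dots,s_n)$ player $2k-1$ receives $B_{s_{2k-1},s_{2k}}$ and player $2k$ receives $-B_{s_{2k-1},s_{2k}}$. *)

From mathcomp Require Import all_boot all_order all_algebra.
Set Implicit Arguments. Unset Strict Implicit. Unset Printing Implicit Defensive.
Import Order.TTheory GRing.Theory Num.Theory.
Local Open Scope ring_scope.

Section RIG.
Variable R : realFieldType.

(* g(l) for l given by its representative r in {0..m-1} *)
Definition gRIG (m f r : nat) : R :=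
  if (r < f)%N then 1 else if (m - f <= r)%N then -1 else 0.

(* B_{a,b} = g(b - a), with (b - a) mod m represented by (b + m - a) %% m *)
Definition Bmat (m f : nat) (a b : 'I_m) : R := gRIG m f ((b + m - a) %% m)%N.

(* Players are 0-indexed: pairs (2k, 2k+1) correspond to the paper's (2k+1, 2k+2).
   partner i = i+1 if i even, i-1 if i odd (n even makes this in range). *)
Definition partner (n : nat) (i : 'I_n) : 'I_n :=
  insubd i (if odd i then i.-1 else i.+1)%N.

Definition payoff (n m f : nat) (i : 'I_n) (s : {ffun 'I_n -> 'I_m}) : R :=
  if odd i then - Bmat f (s (partner i)) (s i)
  else Bmat f (s i) (s (partner i)).

Definition mixed (m : nat) (x : 'I_m -> R) : Prop :=
  (forall a, 0 <= x a) /\ \sum_(a < m) x a = 1.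

Definition is_profile (n m : nat) (sigma : 'I_n -> 'I_m -> R) : Prop :=
  forall i, mixed (sigma i).

Definition EU (n m f : nat) (sigma : 'I_n -> 'I_m -> R) (i : 'I_n) : R :=
  \sum_(s : {ffun 'I_n -> 'I_m}) (\prod_(j < n) sigma j (s j)) * payoff f i s.

Definition deviate (n m : nat) (sigma tau : 'I_n -> 'I_m -> R) (P : {set 'I_n})
  : 'I_n -> 'I_m -> R := fun j => if j \in P then tau j else sigma j.

Definition is_Nash (n m f : nat) (sigma : 'I_n -> 'I_m -> R) : Prop :=
  is_profile sigma /\
  forall (i : 'I_n) (t : 'I_m -> R), mixed t ->
    EU f (deviate sigma (fun _ => t) [set i]) i <= EU f sigma i.

Definition is_alliance_resistant_Nash (n m f : nat) (sigma : 'I_n -> 'I_m -> R)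
  : Prop :=
  is_profile sigma /\
  forall (P : {set 'I_n}) (tau : 'I_n -> 'I_m -> R),
    P != set0 -> is_profile tau ->
    \sum_(i in P) EU f (deviate sigma tau P) i <= \sum_(i in P) EU f sigma i.

Definition uniform_profile (n m : nat) : 'I_n -> 'I_m -> R :=
  fun _ _ => (m%:R)^-1.

End RIG.

From mathcomp Require Import all_boot all_order all_algebra.
From mathcomp Require Import zify ring lra.
Set Implicit Arguments. Unset Strict Implicit. Unset Printing Implicit Defensive.
Import Order.TTheory GRing.Theory Num.Theory.
Local Open Scope ring_scope.

(* Identify 'I_m with Z/mZ.  Writing W(c) = x(c) + ... + x(c + f - 1) for the
   window sums of a vector x, the row (resp. column) relations x^T B = 0
   (resp. B x = 0) of the circulant matrix B say exactly that W is invariant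
   under translation by f.  As gcd(f, m) = 1, f generates Z/mZ, so W is
   constant; then W(c + 1) - W(c) = x(c + f) - x(c) = 0 and x is constant.

   The expected payoff of a player depends only on its own mixed strategy and
   its partner's, through the bilinear zero-sum form x^T B y, and every row and
   column of B sums to 0.  Against a uniform strategy everybody gets 0, so an
   alliance gains only inside the pairs it contains completely, where the gains
   cancel.  Conversely, at a Nash equilibrium each player secures 0 by playing
   uniformly, while each pure reply b of its partner gives it at least its
   equilibrium payoff; these payoffs are thus all >= 0 and sum to 0, so x lies
   in the left or right kernel of B and is uniform. *)

Lemma sum_mul_indicator (R : pzSemiRingType) (T : finType) (y : T -> R) (a : T) :
  \sum_c y c * (c == a)%:R = y a.
Proof.
rewrite (bigD1 a) //= eqxx mulr1 big1 ?addr0 // => c /negbTE->.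
by rewrite mulr0.
Qed.

Lemma constant_distribution_uniform (R : numFieldType) (T : finType)
    (x : T -> R) (a0 : T) :
  \sum_a x a = 1 -> (forall a, x a = x a0) -> forall a, x a = #|T|%:R^-1.
Proof.
move=> sum1 xconst a; rewrite xconst.
have T_gt0 : (0 < #|T|)%N by apply/card_gt0P; exists a0.
have nz : (#|T|%:R : R) != 0 by rewrite pnatr_eq0 -lt0n.
apply: (mulIf nz); rewrite mulVf // mulr_natr -sum1 -sumr_const.
by apply: eq_bigr => b _; rewrite xconst.
Qed.

Section ZpTranslation.
Variable p : nat.
Local Notation m := p.+2.

Lemma val_subZp (a b : 'I_m) : b - a = ((b + m - a) %% m)%N :> nat.
Proof. by rewrite /= modnDmr addnBA // ltnW. Qed.

Lemma natr_Zp_modulus : (m%:R : 'I_m) = 0.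
Proof. by rewrite Zp_nat; apply: val_inj; rewrite /= modnn. Qed.

Lemma rev_ordZp (k : 'I_m) : rev_ord k = -1 - k.
Proof.
transitivity ((m - k.+1)%N%:R : 'I_m).
  by rewrite Zp_nat; apply: val_inj; rewrite /= modn_small // ltn_subrL.
by rewrite natrB // natr_Zp_modulus sub0r mulrS natr_Zp opprD.
Qed.

Lemma translation_invariant_const (T : Type) (h : 'I_m -> T) (u : 'I_m) :
  u \is a GRing.unit -> (forall c, h (c + u) = h c) -> forall c, h c = h 0.
Proof.
move=> u_unit hu.
have hmul j c : h (c + u *+ j) = h c.
  by elim: j c => [|j IHj] c; rewrite ?mulr0n ?addr0 // mulrSr addrA hu IHj.
by move=> c; rewrite -(hmul (u^-1 * c) 0) -mulr_natr natr_Zp mulVKr // add0r.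
Qed.

End ZpTranslation.

Section CirculantKernel.
Variables (R : realFieldType) (p f : nat).
Local Notation m := p.+2.
Hypotheses (f_gt0 : (0 < f)%N) (f_le_half : (f * 2 <= m)%N).

Lemma Bmat_subZp (a b : 'I_m) : Bmat R f a b = gRIG R m f (b - a)%R.
Proof. by rewrite /Bmat -val_subZp. Qed.

Lemma gRIG_indicators (r : nat) :
  gRIG R m f r = (r < f)%N%:R - (m - f <= r)%N%:R.
Proof.
by rewrite /gRIG; case: ltnP => ?; case: leqP => ? /=;
  rewrite ?subr0 ?sub0r ?subrr //; lia.
Qed.

Definition window_sum (x : 'I_m -> R) (c : 'I_m) : R :=
  \sum_(j < f) x (c + j%:R).

Lemma sum_mul_window_indicator (y : 'I_m -> R) :
  \sum_(l : 'I_m) y l * (l < f)%N%:R = \sum_(j < f) y j%:R.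
Proof.
have f_le_m : (f <= m)%N by lia.
transitivity (\sum_(l < m | (l < f)%N) y l).
  by rewrite [RHS]big_mkcond; apply: eq_bigr => l _; case: ifP; rewrite ?mulr1 ?mulr0.
rewrite (big_ord_narrow f_le_m); apply: eq_bigr => j _; congr y.
by rewrite Zp_nat; apply: val_inj; rewrite /= modn_small // (leq_trans _ f_le_m).
Qed.

Lemma sum_mul_gRIG (y : 'I_m -> R) :
  \sum_l y l * gRIG R m f l = \sum_(j < f) y j%:R - \sum_(j < f) y (-1 - j%:R).
Proof.
under eq_bigr do rewrite gRIG_indicators mulrBr.
rewrite sumrB sum_mul_window_indicator; congr (_ - _).
rewrite -(sum_mul_window_indicator (fun j => y (-1 - j))).
rewrite (reindex_inj rev_ord_inj); apply: eq_bigr => l _.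
congr (_ * _%:R); first by rewrite rev_ordZp.
by rewrite /=; have := ltn_ord l; lia.
Qed.

Lemma sum_sub_window (x : 'I_m -> R) c :
  \sum_(j < f) x (c - j%:R) = window_sum x (c - f.-1%:R).
Proof.
rewrite /window_sum (reindex_inj rev_ord_inj); apply: eq_bigr => j _.
have j_le : (j <= f.-1)%N by have := ltn_ord j; lia.
rewrite /= (_ : f - j.+1 = f.-1 - j)%N; last by lia.
by rewrite natrB // opprB addrA addrAC.
Qed.

Lemma natr_predS : (f.-1%:R + 1 : 'I_m) = f%:R.
Proof. by rewrite -mulrSr prednK. Qed.

Lemma sum_mul_Bmat_l (x : 'I_m -> R) b :
  \sum_a x a * Bmat R f a b = window_sum x (b - f.-1%:R) - window_sum x (b + 1).
Proof.
under eq_bigr do rewrite Bmat_subZp.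
rewrite (reindex_inj (inv_inj (subKr b))).
under eq_bigr do rewrite subKr.
rewrite sum_mul_gRIG sum_sub_window; congr (_ - _); apply: eq_bigr => j _.
by congr x; ring.
Qed.

Lemma sum_mul_Bmat_r (x : 'I_m -> R) b :
  \sum_a x a * Bmat R f b a = window_sum x b - window_sum x (b - f%:R).
Proof.
under eq_bigr do rewrite Bmat_subZp.
rewrite (reindex_inj (addrI b)).
under eq_bigr do rewrite [_ - b]addrC addKr.
rewrite sum_mul_gRIG; congr (_ - _).
transitivity (\sum_(j < f) x (b - 1 - j%:R)).
  by apply: eq_bigr => j _; congr x; ring.
by rewrite sum_sub_window -natr_predS; congr window_sum; ring.
Qed.

Lemma window_sumS (x : 'I_m -> R) c :
  window_sum x (c + 1) = window_sum x c + x (c + f%:R) - x c.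
Proof.
rewrite /window_sum -(prednK f_gt0) big_ord_recr big_ord_recl /= prednK // addr0.
have -> : c + 1 + f.-1%:R = c + f%:R by rewrite -natr_predS; ring.
rewrite (eq_bigr (fun i : 'I_f.-1 => x (c + (bump 0 i)%:R))); first ring.
by move=> i _; congr x; rewrite /bump add1n mulrS addrA.
Qed.

Lemma sum_Bmat_l (b : 'I_m) : \sum_a Bmat R f a b = 0.
Proof.
have := sum_mul_Bmat_l (fun=> 1) b; rewrite /window_sum subrr.
by under eq_bigr do rewrite mul1r.
Qed.

Lemma sum_Bmat_r (b : 'I_m) : \sum_a Bmat R f b a = 0.
Proof.
have := sum_mul_Bmat_r (fun=> 1) b; rewrite /window_sum subrr.
by under eq_bigr do rewrite mul1r.
Qed.

Hypothesis f_coprime : coprime f m.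

Lemma natr_coprime_unit : (f%:R : 'I_m) \is a GRing.unit.
Proof. by rewrite (unitZpE f (isT : (1 < m)%N)) coprime_sym. Qed.

Lemma window_sum_periodic_const (x : 'I_m -> R) :
  (forall c, window_sum x (c + f%:R) = window_sum x c) -> forall c, x c = x 0.
Proof.
move=> /(translation_invariant_const natr_coprime_unit) window_const.
apply: (translation_invariant_const natr_coprime_unit) => c.
have := window_sumS x c; rewrite !window_const; lra.
Qed.

Lemma Bmat_left_kernel (x : 'I_m -> R) :
  (forall b, \sum_a x a * Bmat R f a b = 0) -> forall a, x a = x 0.
Proof.
move=> xB; apply: window_sum_periodic_const => c.
have := xB (c + f.-1%:R); rewrite sum_mul_Bmat_l addrK -addrA natr_predS.
by move/eqP; rewrite subr_eq0 => /eqP.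
Qed.

Lemma Bmat_right_kernel (x : 'I_m -> R) :
  (forall b, \sum_a Bmat R f b a * x a = 0) -> forall a, x a = x 0.
Proof.
move=> Bx; apply: window_sum_periodic_const => c.
have := Bx (c + f%:R); under eq_bigr do rewrite mulrC.
by rewrite sum_mul_Bmat_r addrK => /eqP; rewrite subr_eq0 => /eqP.
Qed.

End CirculantKernel.

Section TwoCoordinateMarginal.
Variables (R : comPzRingType) (I T : finType) (rho : I -> T -> R).
Hypothesis rho_sum1 : forall j, \sum_c rho j c = 1.
Variables (i q : I).
Hypothesis i_neq_q : i != q.

Lemma prod_supported_on_pair (g : I -> R) :
  (forall j, j != i -> j != q -> g j = 1) -> \prod_j g j = g i * g q.
Proof.
move=> g1; rewrite (bigD1 i) //= (bigD1 q) 1?eq_sym //= big1 ?mulr1 //.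
by move=> j /andP[]; apply: g1.
Qed.

Lemma expect_two_coords (F : T -> T -> R) :
  \sum_(s : {ffun I -> T}) (\prod_j rho j (s j)) * F (s i) (s q) =
  \sum_a \sum_b rho i a * rho q b * F a b.
Proof.
pose w (a b : T) j (c : T) : R :=
  if j == i then (c == a)%:R else if j == q then (c == b)%:R else 1.
have w_out a b j c : j != i -> j != q -> w a b j c = 1.
  by rewrite /w => /negbTE-> /negbTE->.
have w_pair a b c c' : w a b i c * w a b q c' = (c == a)%:R * (c' == b)%:R.
  by rewrite /w eqxx [q == i]eq_sym (negbTE i_neq_q) eqxx.
have expect_w a b : \sum_(s : {ffun I -> T})
    (\prod_j rho j (s j)) * ((s i == a)%:R * (s q == b)%:R) = rho i a * rho q b.
  transitivity (\prod_j \sum_c rho j c * w a b j c).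
    rewrite bigA_distr_bigA; apply: eq_bigr => s _.
    rewrite big_split /= (prod_supported_on_pair (g := fun j => w a b j (s j))).
      by rewrite w_pair.
    by move=> j; apply: w_out.
  rewrite (prod_supported_on_pair (g := fun j => \sum_c rho j c * w a b j c)).
    by rewrite /w eqxx [q == i]eq_sym (negbTE i_neq_q) eqxx !sum_mul_indicator.
  by move=> j ji jq; under eq_bigr do rewrite w_out // mulr1.
transitivity (\sum_(s : {ffun I -> T}) \sum_a \sum_b
    (\prod_j rho j (s j)) * ((s i == a)%:R * (s q == b)%:R) * F a b).
  apply: eq_bigr => s _; rewrite -[F _ _](sum_mul_indicator (fun a => F a (s q))).
  rewrite mulr_sumr; apply: eq_bigr => a _.
  rewrite -[F a _](sum_mul_indicator (F a)) mulr_suml mulr_sumr.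
  by apply: eq_bigr => b _; rewrite !(eq_sym _ (s _)); ring.
rewrite exchange_big; apply: eq_bigr => a _; rewrite exchange_big.
by apply: eq_bigr => b _; rewrite -mulr_suml expect_w.
Qed.

End TwoCoordinateMarginal.

Section Partner.
Variable n : nat.
Hypothesis n_even : ~~ odd n.

Lemma partner_val (i : 'I_n) : partner i = (if odd i then i.-1 else i.+1)%N :> nat.
Proof.
rewrite val_insubd; case: (boolP (odd i)) => i_odd; case: ifP => // /negbT out.
  by have := ltn_ord i; lia.
have n_eq : n = i.+1 by have := ltn_ord i; lia.
suff : odd n by rewrite (negbTE n_even).
by rewrite n_eq /= i_odd.
Qed.

Lemma odd_partner (i : 'I_n) : odd (partner i) = ~~ odd i.
Proof.
rewrite partner_val; case: (boolP (odd i)) => //=.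
by case: (nat_of_ord i) => //= k /negbTE.
Qed.

Lemma partnerK : involutive (@partner n).
Proof.
move=> i; apply: val_inj => /=; rewrite partner_val odd_partner partner_val.
by case: (nat_of_ord i) => //= k; case: (odd k).
Qed.

Lemma partner_inj : injective (@partner n).
Proof. exact: inv_inj partnerK. Qed.

Lemma partner_neq (i : 'I_n) : i != partner i.
Proof.
apply/eqP => /(congr1 val); rewrite /= partner_val.
by case: (boolP (odd i)); case: (nat_of_ord i) => // k; lia.
Qed.

End Partner.

Section RIGGame.
Variables (R : realFieldType) (n p f : nat).
Local Notation m := p.+2.
Hypotheses (n_even : ~~ odd n) (f_gt0 : (0 < f)%N) (f_le_half : (f * 2 <= m)%N).

Definition pay (i : 'I_n) (a b : 'I_m) : R :=
  if odd i then - Bmat R f b a else Bmat R f a b.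

Definition mixed_pay (i : 'I_n) (x y : 'I_m -> R) : R :=
  \sum_a \sum_b x a * y b * pay i a b.

Lemma EU_mixed_pay (rho : 'I_n -> 'I_m -> R) i :
  (forall j, \sum_a rho j a = 1) -> EU f rho i = mixed_pay i (rho i) (rho (partner i)).
Proof.
move=> rho_sum1; rewrite /EU /mixed_pay.
rewrite -(expect_two_coords rho_sum1 (partner_neq n_even i) (pay i)).
by apply: eq_bigr => s _; rewrite /payoff /pay; case: odd.
Qed.

Lemma sum_pay_l i b : \sum_a pay i a b = 0.
Proof. by rewrite /pay; case: odd; rewrite ?sumrN ?sum_Bmat_l ?sum_Bmat_r ?oppr0. Qed.

Lemma sum_pay_r i a : \sum_b pay i a b = 0.
Proof. by rewrite /pay; case: odd; rewrite ?sumrN ?sum_Bmat_l ?sum_Bmat_r ?oppr0. Qed.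

Lemma mixed_pay_const_l i c y : mixed_pay i (fun=> c) y = 0.
Proof.
rewrite /mixed_pay exchange_big big1 // => b _.
by rewrite -mulr_sumr sum_pay_l mulr0.
Qed.

Lemma mixed_pay_const_r i x c : mixed_pay i x (fun=> c) = 0.
Proof. by rewrite /mixed_pay big1 // => a _; rewrite -mulr_sumr sum_pay_r mulr0. Qed.

Lemma mixed_pay_pure_r i x b :
  mixed_pay i x (fun c => (c == b)%:R) = \sum_a x a * pay i a b.
Proof.
apply: eq_bigr => a _; rewrite -(sum_mul_indicator (fun c => x a * pay i a c)).
by apply: eq_bigr => c _; rewrite mulrAC.
Qed.

Lemma mixed_pay_partner i x y : mixed_pay (partner i) x y = - mixed_pay i y x.
Proof.
rewrite /mixed_pay exchange_big -sumrN; apply: eq_bigr => b _.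
rewrite -sumrN; apply: eq_bigr => a _.
by rewrite /pay odd_partner //; case: odd => /=; ring.
Qed.

Lemma EU_partner (rho : 'I_n -> 'I_m -> R) i :
  (forall j, \sum_a rho j a = 1) -> EU f rho (partner i) = - EU f rho i.
Proof.
by move=> rho_sum1; rewrite !EU_mixed_pay // partnerK // mixed_pay_partner.
Qed.

Lemma EU_deviate_single (sigma : 'I_n -> 'I_m -> R) j t :
  (forall k, \sum_a sigma k a = 1) -> \sum_a t a = 1 ->
  EU f (deviate sigma (fun=> t) [set j]) j = mixed_pay j t (sigma (partner j)).
Proof.
move=> sigma_sum1 t_sum1; rewrite EU_mixed_pay => [|k]; last first.
  by rewrite /deviate; case: ifP.
by rewrite /deviate set11 in_set1 eq_sym (negbTE (partner_neq n_even j)).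
Qed.

Lemma sum_uniform : \sum_(a < m) (m%:R : R)^-1 = 1.
Proof. by rewrite sumr_const card_ord -[_ *+ _]mulr_natr mulVf // pnatr_eq0. Qed.

Lemma uniform_is_profile : is_profile (@uniform_profile R n m).
Proof. by move=> j; split; [move=> a; rewrite invr_ge0 ler0n | exact: sum_uniform]. Qed.

Theorem uniform_alliance_resistant :
  is_alliance_resistant_Nash f (@uniform_profile R n m).
Proof.
split=> [|P tau _ tau_prof]; first exact: uniform_is_profile.
set u := @uniform_profile R n m; set rho := deviate u tau P.
have u_sum1 j : \sum_a u j a = 1 := sum_uniform.
have rho_sum1 j : \sum_a rho j a = 1.
  by rewrite /rho /deviate; case: ifP => _; [case: (tau_prof j) | exact: u_sum1].
have -> : \sum_(i in P) EU f u i = 0.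
  by apply: big1 => i _; rewrite EU_mixed_pay // mixed_pay_const_r.
have -> : \sum_(i in P) EU f rho i = \sum_(i in P | partner i \in P) EU f rho i.
  rewrite big_mkcondr; apply: eq_bigr => i _; case: ifP => // q_notin_P.
  by rewrite EU_mixed_pay // {2}/rho /deviate q_notin_P mixed_pay_const_r.
have pairs_cancel : \sum_(i in P | partner i \in P) EU f rho i =
                    - \sum_(i in P | partner i \in P) EU f rho i.
  rewrite {1}(reindex_inj (partner_inj n_even)) -sumrN /=.
  apply: eq_big => [j | j _]; first by rewrite partnerK // andbC.
  exact: EU_partner.
lra.
Qed.

Hypothesis f_coprime : coprime f m.

Lemma pay_left_kernel i x :
  (forall b, \sum_a x a * pay i a b = 0) -> forall a, x a = x 0.
Proof.
have ker_l := Bmat_left_kernel f_gt0 f_le_half f_coprime.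
have ker_r := Bmat_right_kernel f_gt0 f_le_half f_coprime.
rewrite /pay; case: odd => x_ker; last exact: ker_l.
apply: ker_r => b; move: (x_ker b); under eq_bigr do rewrite mulrN mulrC.
by rewrite sumrN => /eqP; rewrite oppr_eq0 => /eqP.
Qed.

Theorem Nash_uniform (sigma : 'I_n -> 'I_m -> R) :
  is_Nash f sigma -> forall i a, sigma i a = m%:R^-1.
Proof.
move=> [sigma_prof Nash] i.
have sigma_sum1 j : \sum_a sigma j a = 1 := (sigma_prof j).2.
set q := partner i; set v := mixed_pay i (sigma i) (sigma q).
have v_ge0 : 0 <= v.
  have := Nash i _ (uniform_is_profile i).
  by rewrite EU_deviate_single ?sum_uniform // mixed_pay_const_l EU_mixed_pay.
have v_le_pure b : v <= mixed_pay i (sigma i) (fun c => (c == b)%:R).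
  have pure_b : mixed (fun c : 'I_m => (c == b)%:R : R).
    split=> [c|]; first by rewrite ler0n.
    by rewrite (bigD1 b) //= eqxx big1 ?addr0 // => c /negbTE->.
  have := Nash q _ pure_b; rewrite EU_deviate_single //; last by case: pure_b.
  by rewrite EU_mixed_pay // /q partnerK // !mixed_pay_partner lerN2.
have pure_zero b : \sum_a sigma i a * pay i a b = 0.
  pose pure_pay c := mixed_pay i (sigma i) (fun c' => (c' == c)%:R).
  rewrite -mixed_pay_pure_r -/(pure_pay b).
  apply: (@psumr_eq0P _ _ predT pure_pay) => // [c _|].
    exact: le_trans v_ge0 (v_le_pure c).
  rewrite /pure_pay; under eq_bigr do rewrite mixed_pay_pure_r.
  rewrite exchange_big big1 // => a _.
  by rewrite -mulr_sumr sum_pay_r mulr0.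
move=> a; rewrite -[m in m%:R](card_ord m).
exact: (constant_distribution_uniform (sigma_sum1 i) (pay_left_kernel pure_zero)).
Qed.

End RIGGame.

Theorem mainTheorem2 (R : realFieldType) (n m f : nat)
  (hn : (0 < n)%N) (hneven : ~~ odd n) (hm : (2 <= m)%N)
  (hf1 : (1 <= f)%N) (hf2 : (f * 2 <= m)%N) (hcop : coprime f m) :
  is_alliance_resistant_Nash f (@uniform_profile R n m) /\
  (forall sigma : 'I_n -> 'I_m -> R, is_Nash f sigma ->
     forall (i : 'I_n) (a : 'I_m), sigma i a = (m%:R)^-1).
Proof.
(* Writing m = p.+2 equips 'I_m with the ring structure of Z/mZ. *)
case: m hm hf2 hcop => [|[|p]] // _ hf2 hcop.
split; first exact: uniform_alliance_resistant.
exact: Nash_uniform.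
Qed.
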